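(* Let $\Omega\subset\mathbb R^d$ be a $d$-dimensional convex body contained in a ball of radius $R$, let $\mu$ be the uniform probability measure on $\Omega$, and let $\alpha$ be in the $\eta$-interior of $\Omega$ (i.e., the open ball of radius $\eta$ about $\alpha$ lies in $\Omega$). Then the minimizer $y^\star\in\mathbb R^d$ of $F_\alpha(y)=\langle y,\alpha\rangle+\log\int_\Omega e^{-\langle y,x\rangle}d\mu(x)$ satisfies $\|y^\star\|\le\frac{2d}{\eta}\log\frac{4R}{\eta}$.
   Context: The uniform probability measure is normalized Lebesgue measure restricted to $\Omega$; $\langle\cdot,\cdot\rangle$ and $\|\cdot\|$ are Euclidean. *)

From HB Require Import structures.
From mathcomp Require Import all_boot all_order all_algebra.
From mathcomp Require Import all_classical all_reals all_analysis.
Set Implicit Arguments. Unset Strict Implicit. Unset Printing Implicit Defensive.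
Import Order.TTheory GRing.Theory Num.Theory.
Import numFieldNormedType.Exports.
Local Open Scope classical_set_scope.
Local Open Scope ring_scope.

Section Defs.
Variable R : realType.

Definition dotp (d : nat) (u v : 'rV[R]_d) : R := \sum_(i < d) u 0 i * v 0 i.
Definition enorm (d : nat) (u : 'rV[R]_d) : R := Num.sqrt (dotp u u).

Definition eball (d : nat) (c : 'rV[R]_d) (r : R) : set 'rV[R]_d :=
  [set x | enorm (x - c) < r].
Definition eclosed_ball (d : nat) (c : 'rV[R]_d) (r : R) : set 'rV[R]_d :=
  [set x | enorm (x - c) <= r].

Definition convex_set (d : nat) (A : set 'rV[R]_d) : Prop :=
  forall x y (t : R), A x -> A y -> 0 <= t -> t <= 1 -> A (t *: x + (1 - t) *: y).

Definition convex_body (d : nat) (A : set 'rV[R]_d) : Prop :=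
  [/\ convex_set A, compact A & exists c r, 0 < r /\ eball c r `<=` A].

(* Integral w.r.t. d-dimensional Lebesgue measure of a nonnegative function,
   written as the iterated Lebesgue integral over R (Tonelli). *)
Fixpoint leb_int (n : nat) : ('rV[R]_n -> \bar R) -> \bar R :=
  match n return ('rV[R]_n -> \bar R) -> \bar R with
  | 0 => fun f => f 0
  | n'.+1 => fun f =>
      (\int[@lebesgue_measure R]_(t in [set: R])
         leb_int (fun v : 'rV[R]_n' => f (row_mx (const_mx t : 'rV[R]_1) v)))%E
  end.

Definition volume (d : nat) (A : set 'rV[R]_d) : \bar R :=
  leb_int (fun x => (\1_A x)%:E).

(* integral of a nonnegative g against the uniform probability measure on A *)
Definition unif_int (d : nat) (A : set 'rV[R]_d) (g : 'rV[R]_d -> R) : R :=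
  fine (leb_int (fun x => (\1_A x * g x)%:E)) / fine (volume A).

Definition F_alpha (d : nat) (Omega : set 'rV[R]_d) (alpha y : 'rV[R]_d) : R :=
  dotp y alpha + ln (unif_int Omega (fun x => expR (- dotp y x))).

End Defs.

From HB Require Import structures.
From mathcomp Require Import all_boot all_order all_algebra.
From mathcomp Require Import all_classical all_reals all_analysis measurable_realfun.
From mathcomp Require Import lra ring.
Import Order.TTheory GRing.Theory Num.Theory.
Local Open Scope classical_set_scope.
Local Open Scope ring_scope.
Set Implicit Arguments. Unset Strict Implicit. Unset Printing Implicit Defensive.

(* Since [F_alpha 0 = 0], a minimizer [y] satisfies [F_alpha y <= 0]. Moving
   [alpha] a distance [3 eta / 4] against [y] gives a center [q] such that the
   ball [B(q, eta / 4)] lies in [B(alpha, eta)], hence in [Omega], and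
   [<y, x> <= <y, alpha> - |y| eta / 2] on it. So the integral of
   [exp (- <y, x>)] over [Omega] is at least
   [exp (- <y, alpha> + |y| eta / 2) vol B(eta / 4)], while
   [vol Omega <= vol B(R)]; together
   [0 >= F_alpha y >= |y| eta / 2 + d log (eta / (4 R))].
   Volumes of balls scale like [r ^ d] by the affine change of variables on
   the real line, applied coordinatewise to the iterated integral [leb_int]. *)

Section euclidean.
Context (R : realType).
Implicit Types (n : nat).

Lemma dotpC n (u v : 'rV[R]_n) : dotp u v = dotp v u.
Proof. by apply: eq_bigr => i _; rewrite mulrC. Qed.

Lemma dotpDr n (u v w : 'rV[R]_n) : dotp u (v + w) = dotp u v + dotp u w.
Proof. by rewrite /dotp -big_split; apply: eq_bigr => i _; rewrite mxE mulrDr. Qed.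

Lemma dotpZr n (u v : 'rV[R]_n) k : dotp u (k *: v) = k * dotp u v.
Proof. by rewrite /dotp mulr_sumr; apply: eq_bigr => i _; rewrite mxE mulrCA. Qed.

Lemma dotpBr n (u v w : 'rV[R]_n) : dotp u (v - w) = dotp u v - dotp u w.
Proof. by rewrite dotpDr -scaleN1r dotpZr mulN1r. Qed.

Lemma dotp0l n (v : 'rV[R]_n) : dotp 0 v = 0.
Proof. by rewrite /dotp big1 // => i _; rewrite mxE mul0r. Qed.

Lemma dotpp_ge0 n (u : 'rV[R]_n) : 0 <= dotp u u.
Proof. by apply: sumr_ge0 => i _; rewrite -expr2 sqr_ge0. Qed.

Lemma sqr_coord_le_dotpp n (u : 'rV[R]_n) i : u 0 i ^+ 2 <= dotp u u.
Proof.
rewrite /dotp (bigD1 i) //= -expr2 lerDl.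
by apply: sumr_ge0 => j _; rewrite -expr2 sqr_ge0.
Qed.

Lemma enorm_ge0 n (u : 'rV[R]_n) : 0 <= enorm u.
Proof. exact: sqrtr_ge0. Qed.

Lemma enorm_sqr n (u : 'rV[R]_n) : enorm u ^+ 2 = dotp u u.
Proof. by rewrite sqr_sqrtr // dotpp_ge0. Qed.

Lemma enorm0 n : enorm (0 : 'rV[R]_n) = 0.
Proof. by rewrite /enorm dotp0l sqrtr0. Qed.

Lemma enormZ n (u : 'rV[R]_n) k : enorm (k *: u) = `|k| * enorm u.
Proof.
rewrite /enorm dotpZr dotpC dotpZr mulrA -expr2 sqrtrM ?sqr_ge0 //.
by rewrite sqrtr_sqr.
Qed.

Lemma enormN n (u : 'rV[R]_n) : enorm (- u) = enorm u.
Proof. by rewrite -scaleN1r enormZ normrN1 mul1r. Qed.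

Lemma normr_coord_le_enorm n (u : 'rV[R]_n) i : `|u 0 i| <= enorm u.
Proof. by rewrite -sqrtr_sqr ler_sqrt ?dotpp_ge0 // sqr_coord_le_dotpp. Qed.

Lemma sqr_dotp_le n (u v : 'rV[R]_n) : dotp u v ^+ 2 <= dotp u u * dotp v v.
Proof.
have [v0|v_neq0] := eqVneq (dotp v v) 0.
  have vi0 i : v 0 i = 0.
    by apply/eqP; rewrite -sqrf_eq0 eq_le sqr_ge0 andbT -v0 sqr_coord_le_dotpp.
  by rewrite v0 mulr0 /dotp big1 ?expr0n// => i _; rewrite vi0 mulr0.
have v_gt0 : 0 < dotp v v by rewrite lt_def v_neq0 dotpp_ge0.
set w := dotp v v *: u - dotp u v *: v.
have ww : dotp w w = dotp v v * (dotp u u * dotp v v - dotp u v ^+ 2).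
  rewrite dotpBr !dotpZr (dotpC w u) (dotpC w v) !dotpBr !dotpZr (dotpC v u).
  by ring.
by have := dotpp_ge0 w; rewrite ww pmulr_rge0 // subr_ge0.
Qed.

Lemma normr_dotp_le n (u v : 'rV[R]_n) : `|dotp u v| <= enorm u * enorm v.
Proof.
rewrite /enorm -sqrtrM ?dotpp_ge0 // -sqrtr_sqr ler_sqrt ?sqr_dotp_le //.
by rewrite mulr_ge0 ?dotpp_ge0.
Qed.

Lemma dotp_le n (u v : 'rV[R]_n) : dotp u v <= enorm u * enorm v.
Proof. exact: le_trans (ler_norm _) (normr_dotp_le u v). Qed.

Lemma enormD_le n (u v : 'rV[R]_n) : enorm (u + v) <= enorm u + enorm v.
Proof.
rewrite {1}/enorm -(ger0_norm (addr_ge0 (enorm_ge0 u) (enorm_ge0 v))).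
rewrite -sqrtr_sqr ler_sqrt ?sqr_ge0 // sqrrD !enorm_sqr.
rewrite dotpDr (dotpC _ u) (dotpC _ v) !dotpDr (dotpC v u).
by have := dotp_le u v; lra.
Qed.

End euclidean.

Section shifted_ball.
Context (R : realType) (n : nat) (alpha y : 'rV[R]_n) (eta : R).
Hypothesis eta_gt0 : 0 < eta.

(* [alpha] moved a distance [3 eta / 4] against [y]; for [y = 0] the division
   by [enorm y = 0] returns [0], so the center is [alpha] itself. *)
Definition shifted_center : 'rV[R]_n := alpha - (3 * eta / 4 / enorm y) *: y.

Let shift_norm : `|3 * eta / 4 / enorm y| * enorm y <= 3 * eta / 4.
Proof.
have eta0 := eta_gt0.
have [->|y_neq0] := eqVneq (enorm y) 0; first by rewrite mulr0; lra.
have y_gt0 : 0 < enorm y by rewrite lt_def y_neq0 enorm_ge0.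
by rewrite ger0_norm ?mulfVK // divr_ge0 ?(ltW y_gt0) //; lra.
Qed.

Let shift_dotp : 3 * eta / 4 / enorm y * dotp y y = 3 * eta / 4 * enorm y.
Proof.
have [y0|y_neq0] := eqVneq (enorm y) 0; first by rewrite y0 invr0 !mulr0 mul0r.
by rewrite -enorm_sqr expr2 mulrA mulfVK.
Qed.

Lemma shifted_eball_sub : eball shifted_center (eta / 4) `<=` eball alpha eta.
Proof.
move=> x; rewrite /eball/= => x_near.
rewrite (_ : x - alpha = (x - shifted_center) - (3 * eta / 4 / enorm y) *: y); last first.
  by apply/rowP => i; rewrite /shifted_center !mxE; ring.
apply: le_lt_trans (enormD_le _ _) _; rewrite enormN enormZ.
by have := shift_norm; have := eta_gt0; lra.
Qed.

Lemma shifted_eball_dotp x : eball shifted_center (eta / 4) x ->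
  dotp y x <= dotp y alpha - enorm y * eta / 2.
Proof.
rewrite /eball/= => x_near.
rewrite (_ : x = alpha + (x - shifted_center) - (3 * eta / 4 / enorm y) *: y); last first.
  by apply/rowP => i; rewrite /shifted_center !mxE; ring.
rewrite dotpBr dotpDr dotpZr shift_dotp.
have := dotp_le y (x - shifted_center).
have := ler_wpM2l (enorm_ge0 y) (ltW x_near).
have := enorm_ge0 y; lra.
Qed.

End shifted_ball.

Section real_lemmas.
Context (R : realType).

Lemma exprD_le_linear (b e : R) n : 0 <= b -> 0 <= e -> e <= 1 ->
  (b + e) ^+ n <= b ^+ n + e * (b + 2) ^+ n.
Proof.
move=> b0 e0 e1; elim: n => [|n IH]; first by rewrite !expr0 mulr1 lerDl.
have P0 : 0 <= (b + 2) ^+ n by rewrite exprn_ge0 // addr_ge0.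
have QP : b ^+ n <= (b + 2) ^+ n by rewrite lerXn2r ?nnegrE ?addr_ge0 // lerDl.
have X0 : 0 <= (b + e) ^+ n by rewrite exprn_ge0 // addr_ge0.
rewrite !exprS.
have h1 : (b + e) * (b + e) ^+ n <= (b + e) * (b ^+ n + e * (b + 2) ^+ n).
  by rewrite ler_wpM2l // addr_ge0.
have h2 : e * b ^+ n <= e * (b + 2) ^+ n by rewrite ler_wpM2l.
have h3 : e * e * (b + 2) ^+ n <= e * (b + 2) ^+ n.
  by rewrite -mulrA -[leRHS]mul1r ler_wpM2r // mulr_ge0.
nra.
Qed.

Lemma ler_exprD_gt0 (x b : R) n : 0 <= b ->
  (forall e, 0 < e -> e <= 1 -> x <= (b + e) ^+ n) -> x <= b ^+ n.
Proof.
move=> b0 H; apply/ler_addgt0Pr => e e0.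
have P0 : 0 < (b + 2) ^+ n by rewrite exprn_gt0 // ltr_wpDl.
pose e' := Num.min 1 (e / (b + 2) ^+ n).
have e'0 : 0 < e' by rewrite lt_min ltr01 divr_gt0.
have e'1 : e' <= 1 by rewrite ge_min lexx.
have e'P : e' * (b + 2) ^+ n <= e by rewrite -ler_pdivlMr // ge_min lexx orbT.
apply: le_trans (H e' e'0 e'1) _; apply: le_trans (exprD_le_linear n b0 (ltW e'0) e'1) _.
by rewrite lerD2l.
Qed.

Lemma ln_exprn (x : R) n : 0 <= x -> 0 < x ^+ n -> ln (x ^+ n) = n%:R * ln x.
Proof.
case: n => [|n] x0 xn; first by rewrite expr0 ln1 mul0r.
have x_gt0 : 0 < x.
  by rewrite lt_def x0 andbT; apply: contraTneq xn => ->; rewrite expr0n ltxx.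
by rewrite lnXn // mulr_natl.
Qed.

End real_lemmas.

(* No measurability is assumed: the slices of the iterated integral [leb_int]
   are not known to be measurable. *)
Section ge0_integralT.
Local Open Scope ereal_scope.
Context d (T : measurableType d) (R : realType) (mu : {measure set T -> \bar R}).
Import HBNNSimple.

Lemma ge0_le_integralT (F G : T -> \bar R) : (forall x, 0 <= F x) ->
  (forall x, F x <= G x) ->
  \int[mu]_(x in [set: T]) F x <= \int[mu]_(x in [set: T]) G x.
Proof.
move=> F0 FG; have G0 x : 0 <= G x by exact: le_trans (F0 x) (FG x).
rewrite !ge0_integralTE//; apply: ge_ereal_sup => _ [h hF <-].
by apply: ereal_sup_ubound; exists h => // x; exact: le_trans (hF x) (FG x).
Qed.

Let ge0_integralZlT_le (k : R) (F : T -> \bar R) : (0 < k)%R ->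
  (forall x, 0 <= F x) ->
  \int[mu]_(x in [set: T]) (k%:E * F x) <= k%:E * \int[mu]_(x in [set: T]) F x.
Proof.
move=> k0 F0; have kF0 x : 0 <= k%:E * F x by rewrite mule_ge0// lee_fin ltW.
rewrite !ge0_integralTE//; apply: ge_ereal_sup => _ [h hF <-].
have k'0 : (0 <= k^-1)%R by rewrite invr_ge0 ltW.
pose h' := scale_nnsfun h k'0.
have -> : sintegral mu h = k%:E * sintegral mu h'.
  by rewrite -sintegralrM; apply: eq_sintegral => x /=; rewrite mulrA mulfV ?mul1r ?gt_eqF.
rewrite lee_pmul2l//; apply: ereal_sup_ubound; exists h' => // x /=.
by rewrite -(@lee_pmul2l _ k%:E)// -EFinM mulrA mulfV ?gt_eqF// mul1r; exact: hF.
Qed.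

Lemma ge0_integralZlT (k : R) (F : T -> \bar R) : (0 < k)%R ->
  (forall x, 0 <= F x) ->
  \int[mu]_(x in [set: T]) (k%:E * F x) = k%:E * \int[mu]_(x in [set: T]) F x.
Proof.
move=> k0 F0; apply/eqP; rewrite eq_le ge0_integralZlT_le//=.
have k'0 : (0 < k^-1)%R by rewrite invr_gt0.
have kF0 x : 0 <= k%:E * F x by rewrite mule_ge0// lee_fin ltW.
rewrite -(@lee_pmul2l _ k^-1%:E)// muleA -EFinM mulVf ?gt_eqF// mul1e.
apply: le_trans _ (ge0_integralZlT_le k'0 kF0).
by under [in X in _ <= X]eq_integral do rewrite muleA -EFinM mulVf ?gt_eqF// mul1e.
Qed.

End ge0_integralT.

Section lebesgue_measure_affine.
Context (R : realType).
Local Open Scope ereal_scope.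
Local Notation mu := (@lebesgue_measure R).

Lemma lebesgue_measure_affine (r b : R) (A : set R) : (0 < r)%R -> measurable A ->
  mu A = r%:E * mu ((fun t => r * t + b)%R @^-1` A).
Proof.
move=> r0 mA.
pose phi : measurableTypeR R -> measurableTypeR R := fun t => (r * t + b)%R.
unshelve epose (nu := pushforward mu phi
  : {measure set (measurableTypeR R) -> \bar R}); first exact: measurable_funD.
apply: (@lebesgue_measure_unique R (mscale (NngNum (ltW r0)) nu)) mA.
move=> _ /ocitvP[->|[[x1 x2]/= x12 ->]]; first by rewrite !measure0.
rewrite /mscale /nu /= /pushforward.
have -> : phi @^-1` `]x1, x2]%classic =
          `]((x1 - b) / r)%R, ((x2 - b) / r)%R]%classic.
  by apply/seteqP; split => t /=; rewrite !in_itv/= ltr_pdivrMr// ler_pdivlMr//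
    ltrBlDr lerBrDr !(mulrC t).
rewrite !lebesgue_measure_itv/= !lte_fin x12 ltr_pM2r ?invr_gt0// ltrD2r x12.
by rewrite -!EFinB -EFinM; congr EFin; field; rewrite gt_eqF.
Qed.

End lebesgue_measure_affine.

Section nnsfun_affine.
Context (R : realType) (h : {nnsfun measurableTypeR R >-> R}) (r b : R).
Import HBNNSimple.

Definition nnsfun_affine (t : measurableTypeR R) : R := h (r * t + b).

Let nnsfun_affine_measurable : measurable_fun [set: measurableTypeR R] nnsfun_affine.
Proof.
apply: (measurableT_comp (f := h) (g := fun t : measurableTypeR R => r * t + b)) => //.
exact: measurable_funD.
Qed.

Let nnsfun_affine_finite : finite_set (range nnsfun_affine).
Proof.
apply: (@sub_finite_set _ _ (range h)); last exact: fimfunP.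
by move=> _ [t _ <-]; exists (r * t + b).
Qed.

Let nnsfun_affine_ge0 t : 0 <= nnsfun_affine t.
Proof. exact: fun_ge0. Qed.

HB.instance Definition _ := isMeasurableFun.Build _ _ _ _ nnsfun_affine
  nnsfun_affine_measurable.
HB.instance Definition _ := FiniteImage.Build _ _ nnsfun_affine nnsfun_affine_finite.
HB.instance Definition _ := isNonNegFun.Build _ _ nnsfun_affine nnsfun_affine_ge0.

End nnsfun_affine.

Section ge0_integral_affine.
Context (R : realType).
Local Open Scope ereal_scope.
Local Notation mu := (@lebesgue_measure R).
Import HBNNSimple.

Let ge0_integral_affine_le (r b : R) (F : R -> \bar R) : (0 < r)%R ->
  (forall x, 0 <= F x) ->
  \int[mu]_(x in [set: R]) F (r * x + b)%R <= r^-1%:E * \int[mu]_(x in [set: R]) F x.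
Proof.
move=> r0 F0; rewrite !ge0_integralTE//; apply: ge_ereal_sup => _ [h hF <-].
have r'0 : (0 < r^-1)%R by rewrite invr_gt0.
pose h' : {nnsfun measurableTypeR R >-> R} := nnsfun_affine h r^-1 (- (b / r)).
have hh' t : h t = h' (r * t + b)%R.
  by rewrite /h' /nnsfun_affine /=; congr (h _); field; rewrite gt_eqF.
have -> : sintegral mu h = r^-1%:E * sintegral mu h'.
  rewrite !sintegralET ge0_mule_fsumr; last exact: nnsfun_mulemu_ge0.
  apply: eq_fsbigr => x _.
  have -> : h @^-1` [set x] = (fun t => r * t + b)%R @^-1` (h' @^-1` [set x]).
    by apply/seteqP; split => t /=; rewrite hh'.
  rewrite [in RHS](@lebesgue_measure_affine R r b _ r0); last first.
    exact: (@measurable_funPTI _ _ _ _ h' [set x]).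
  by rewrite muleCA; congr (_ * _); rewrite muleA -EFinM mulVf ?gt_eqF// mul1e.
rewrite lee_pmul2l//; apply: ereal_sup_ubound; exists h' => // x /=.
have := hF (r^-1 * x - b / r)%R; rewrite /h' /nnsfun_affine /=.
by have -> : (r * (r^-1 * x - b / r) + b = x)%R by field; rewrite gt_eqF.
Qed.

Lemma ge0_integral_affine (r b : R) (F : R -> \bar R) : (0 < r)%R ->
  (forall x, 0 <= F x) ->
  \int[mu]_(x in [set: R]) F (r * x + b)%R = r^-1%:E * \int[mu]_(x in [set: R]) F x.
Proof.
move=> r0 F0; apply/eqP; rewrite eq_le ge0_integral_affine_le//=.
have r'0 : (0 < r^-1)%R by rewrite invr_gt0.
rewrite -(@lee_pmul2l _ r%:E)// muleA -EFinM mulfV ?gt_eqF// mul1e.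
have := ge0_integral_affine_le (- (b / r)) r'0 (fun x => F0 (r * x + b)%R).
rewrite invrK; apply: le_trans; apply: ge0_le_integralT => // x.
by rewrite (_ : r * _ + b = x)%R //; field; rewrite gt_eqF.
Qed.

End ge0_integral_affine.

Section leb_int.
Context (R : realType).
Local Open Scope ereal_scope.
Implicit Types (n : nat).

Lemma leb_int_ge0 n (f : 'rV[R]_n -> \bar R) : (forall x, 0 <= f x) ->
  0 <= leb_int f.
Proof.
elim: n f => [|n IH] f f0 /=; first exact: f0.
by apply: integral_ge0 => t _; apply: IH => v; exact: f0.
Qed.

Lemma le_leb_int n (f g : 'rV[R]_n -> \bar R) : (forall x, 0 <= f x) ->
  (forall x, f x <= g x) -> leb_int f <= leb_int g.
Proof.
elim: n f g => [|n IH] f g f0 fg /=; first exact: fg.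
apply: ge0_le_integralT => t; first by apply: leb_int_ge0 => v; exact: f0.
by apply: IH => v; [exact: f0|exact: fg].
Qed.

Lemma leb_int0 n (f : 'rV[R]_n -> \bar R) : (forall x, f x = 0) -> leb_int f = 0.
Proof.
elim: n f => [|n IH] f f0 /=; first exact: f0.
by under eq_integral do rewrite IH//; exact: integral0.
Qed.

Lemma leb_intZl n (k : R) (f : 'rV[R]_n -> \bar R) : (0 < k)%R ->
  (forall x, 0 <= f x) -> leb_int (fun x => k%:E * f x) = k%:E * leb_int f.
Proof.
elim: n f => [|n IH] f k0 f0 //=.
under eq_integral do rewrite IH//.
by apply: ge0_integralZlT => // t; apply: leb_int_ge0.
Qed.

Lemma leb_int_affine n (r : R) (p : 'rV[R]_n) (f : 'rV[R]_n -> \bar R) :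
  (0 < r)%R -> (forall x, 0 <= f x) ->
  leb_int (fun x => f (r^-1 *: (x - p))) = (r ^+ n)%:E * leb_int f.
Proof.
elim: n p f => [|n IH] p f r0 f0 /=.
  by rewrite expr0 mul1e (thinmx0 (_ *: _)) (thinmx0 (0%R : 'rV[R]_0)).
pose p0 := (lsubmx (p : 'rV_(1 + n)) 0 0)%R; pose p' := rsubmx (p : 'rV_(1 + n)).
have split_affine t v : r^-1 *: (row_mx (const_mx t : 'rV_1) v - (p : 'rV_(1 + n))) =
    row_mx (const_mx (r^-1 * t - r^-1 * p0)%R : 'rV_1) (r^-1 *: (v - p')).
  rewrite -[p in LHS](hsubmxK (p : 'rV_(1 + n))) opp_row_mx add_row_mx.
  rewrite scale_row_mx; congr row_mx.
  by apply/rowP => i; rewrite !mxE (ord1 i) /p0 mxE mulrBr.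
under eq_integral => t _.
  under eq_fun do rewrite split_affine.
  rewrite (IH p' (fun w => f (row_mx (const_mx (r^-1 * t - r^-1 * p0)%R : 'rV_1) w)))//.
  over.
have g0 t : 0 <= leb_int (fun w => f (row_mx (const_mx t : 'rV_1) w)).
  exact: leb_int_ge0.
rewrite ge0_integralZlT ?exprn_gt0// (@ge0_integral_affine R _ _
  (fun t => leb_int (fun w => f (row_mx (const_mx t : 'rV_1) w)))) ?invr_gt0//.
by rewrite invrK muleA -EFinM exprSr.
Qed.

Definition cube n (p : 'rV[R]_n) (a : R) : set 'rV[R]_n :=
  [set x | forall i, (`|x 0 i - p 0 i| <= a)%R].

Lemma cube_row_mx n (p : 'rV[R]_(1 + n)) a t (v : 'rV[R]_n) :
  cube p a (row_mx (const_mx t : 'rV_1) v) <->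
  (`|t - lsubmx p 0 0| <= a)%R /\ cube (rsubmx p) a v.
Proof.
split=> [tv_cube|[t_near v_cube] i].
  split; first by have := tv_cube (lshift n ord0); rewrite row_mxEl !mxE.
  by move=> j; have := tv_cube (rshift 1 j); rewrite row_mxEr !mxE.
case: (splitP i) => j ij.
  rewrite (_ : i = lshift n j); last exact: val_inj.
  by move: t_near; rewrite row_mxEl !mxE (ord1 j).
rewrite (_ : i = rshift 1 j); last exact: val_inj.
by have := v_cube j; rewrite row_mxEr !mxE.
Qed.

Lemma volume_cube n (p : 'rV[R]_n) (a : R) : (0 < a)%R ->
  volume (cube p a) = ((2 * a) ^+ n)%:E.
Proof.
rewrite /volume; elim: n p => [|n IH] p a0 /=.
  by rewrite indicE expr0 mem_set// => -[].
pose I := `[(lsubmx (p : 'rV_(1 + n)) 0 0 - a)%R, (lsubmx (p : 'rV_(1 + n)) 0 0 + a)%R].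
have slice t : leb_int (fun v => (\1_(cube p a) (row_mx (const_mx t : 'rV_1) v))%:E) =
    ((2 * a) ^+ n)%:E * (\1_[set` I] t)%:E.
  rewrite indicE; have [tI|tI] := boolP (t \in [set` I]).
    rewrite mule1 -(IH (rsubmx (p : 'rV_(1 + n))))//; congr leb_int; apply: funext => v.
    rewrite !indicE; congr (EFin (nat_of_bool _)%:R); apply/idP/idP; rewrite !inE.
      by case/cube_row_mx.
    move=> v_cube; apply/cube_row_mx; split => //.
    by move: tI; rewrite inE/= in_itv/= ler_distl.
  rewrite mule0; apply: leb_int0 => v; rewrite indicE memNset// => /cube_row_mx[t_near _].
  by move/negP: tI; apply; rewrite inE/= in_itv/= -ler_distl.
under eq_integral do rewrite slice.
rewrite ge0_integralZlT ?exprn_gt0 ?mulr_gt0//.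
have lenI : (@lebesgue_measure R) [set` I] = (2 * a)%:E.
  rewrite lebesgue_measure_itv/= lte_fin ltrD2l gtrN// -EFinD; congr EFin; ring.
by rewrite integral_indic// setIT [X in _ * X = _]lenI -EFinM exprSr.
Qed.

End leb_int.

Section volume.
Context (R : realType) (n : nat).
Implicit Types (A B : set 'rV[R]_n) (p : 'rV[R]_n).

Lemma volume_ge0 A : (0 <= volume A)%E.
Proof. by apply: leb_int_ge0 => x; rewrite lee_fin. Qed.

Lemma le_volume A B : A `<=` B -> (volume A <= volume B)%E.
Proof.
move=> AB; apply: le_leb_int => x; rewrite lee_fin // !indicE.
by have [/set_mem/AB/mem_set ->|_] := boolP (x \in A).
Qed.

Lemma volume_eball_scale p (r : R) : 0 < r ->
  volume (eball p r) = ((r ^+ n)%:E * volume (eball (0 : 'rV[R]_n) 1))%E.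
Proof.
move=> r0; rewrite /volume -(leb_int_affine p)//.
congr leb_int; apply: funext => x; congr (EFin (nat_of_bool _)%:R).
have scaled_norm : enorm (r^-1 *: (x - p) - 0) = enorm (x - p) / r.
  by rewrite subr0 enormZ ger0_norm ?invr_ge0 ?(ltW r0)// mulrC.
apply/idP/idP => /set_mem; rewrite /eball/= => x_in; apply/mem_set => /=.
  by rewrite scaled_norm ltr_pdivrMr// mul1r.
by move: x_in; rewrite scaled_norm ltr_pdivrMr// mul1r.
Qed.

Lemma cube_sub_eball : cube 0 n.+1%:R^-1 `<=` eball (0 : 'rV[R]_n) 1.
Proof.
set a := n.+1%:R^-1 => x x_cube; rewrite /eball/= subr0 /enorm -sqrtr1 ltr_sqrt//.
apply: (@le_lt_trans _ _ (\sum_(i < n) a ^+ 2)).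
  apply: ler_sum => i _; have := x_cube i; rewrite mxE subr0 ler_norml -expr2.
  by move=> /andP[? ?]; nra.
rewrite sumr_const card_ord -mulr_natr.
have a_gt0 : 0 < a by rewrite invr_gt0.
have an1 : a * (n%:R + 1) = 1 by rewrite /a natr1 mulVf // pnatr_eq0.
have := ler0n R n; nra.
Qed.

Lemma eball_sub_cube : eball (0 : 'rV[R]_n) 1 `<=` cube 0 1.
Proof.
move=> x; rewrite /eball/= subr0 => x_lt1 i; rewrite mxE subr0.
exact: le_trans (normr_coord_le_enorm x i) (ltW x_lt1).
Qed.

Definition unit_ball_volume : R := fine (volume (eball (0 : 'rV[R]_n) 1)).

Lemma unit_ball_volumeE : volume (eball (0 : 'rV[R]_n) 1) = unit_ball_volume%:E.
Proof.
rewrite fineK// ge0_fin_numE ?volume_ge0//.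
by apply: le_lt_trans (le_volume eball_sub_cube) _; rewrite volume_cube ?ltry.
Qed.

Lemma unit_ball_volume_gt0 : 0 < unit_ball_volume.
Proof.
rewrite -lte_fin -unit_ball_volumeE; apply: lt_le_trans (le_volume cube_sub_eball).
by rewrite volume_cube ?invr_gt0// lte_fin exprn_gt0// mulr_gt0 ?invr_gt0.
Qed.

Lemma volume_eball p (r : R) : 0 < r ->
  volume (eball p r) = (r ^+ n * unit_ball_volume)%:E.
Proof. by move=> r0; rewrite volume_eball_scale// unit_ball_volumeE. Qed.

Lemma volume_le_eclosed_ball A c (Rad : R) : 0 <= Rad ->
  A `<=` eclosed_ball c Rad -> (volume A <= (Rad ^+ n * unit_ball_volume)%:E)%E.
Proof.
move=> Rad0 A_sub.
have A_le e : 0 < e -> (volume A <= ((Rad + e) ^+ n * unit_ball_volume)%:E)%E.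
  move=> e0; rewrite -(volume_eball c) ?ltr_wpDl//; apply: le_volume => x /A_sub.
  by rewrite /eclosed_ball /eball/=; lra.
have Afin : volume A = (fine (volume A))%:E.
  by rewrite fineK// ge0_fin_numE ?volume_ge0//; apply: le_lt_trans (A_le 1 ltr01) (ltry _).
rewrite Afin lee_fin -ler_pdivrMr ?unit_ball_volume_gt0//.
apply: ler_exprD_gt0 => // e e0 _.
by rewrite ler_pdivrMr ?unit_ball_volume_gt0// -lee_fin -Afin A_le.
Qed.

End volume.

Section minimizer_bound.
Context (R : realType) (d : nat) (Omega : set 'rV[R]_d) (c alpha : 'rV[R]_d).
Context (Rad eta : R).
Hypotheses (Omega_sub : Omega `<=` eclosed_ball c Rad) (eta_gt0 : 0 < eta)
  (eball_sub : eball alpha eta `<=` Omega).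

Local Notation w := (unit_ball_volume R d).
Local Notation V := (fine (volume Omega)).

Let laplace (y : 'rV[R]_d) := leb_int (fun x => (\1_Omega x * expR (- dotp y x))%:E).

Lemma Rad_ge0 : 0 <= Rad.
Proof.
have : Omega alpha by apply: eball_sub; rewrite /eball/= subrr enorm0.
by move/Omega_sub; apply: le_trans; exact: enorm_ge0.
Qed.

Let volume_Omega_le : (volume Omega <= (Rad ^+ d * w)%:E)%E.
Proof. exact: volume_le_eclosed_ball Rad_ge0 Omega_sub. Qed.

Lemma volume_OmegaE : volume Omega = V%:E.
Proof.
by rewrite fineK// ge0_fin_numE ?volume_ge0//; exact: le_lt_trans volume_Omega_le (ltry _).
Qed.

Lemma volume_Omega_gt0 : 0 < V.
Proof.
rewrite -lte_fin -volume_OmegaE; apply: lt_le_trans (le_volume eball_sub).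
by rewrite volume_eball// lte_fin mulr_gt0 ?exprn_gt0 ?unit_ball_volume_gt0.
Qed.

Lemma F_alpha0 : F_alpha Omega alpha 0 = 0.
Proof.
rewrite /F_alpha /unif_int dotp0l add0r.
under eq_fun do rewrite dotp0l oppr0 expR0 mulr1.
by rewrite -/(volume Omega) divff ?gt_eqF ?volume_Omega_gt0 // ln1.
Qed.

Let laplace_le y : (laplace y <= (expR (enorm y * (enorm c + Rad)) * V)%:E)%E.
Proof.
rewrite EFinM -volume_OmegaE /volume -leb_intZl ?expR_gt0//.
apply: le_leb_int => x; first by rewrite lee_fin mulr_ge0 ?expR_ge0.
rewrite -EFinM lee_fin !indicE.
have [/set_mem Omega_x|_] := boolP (x \in Omega); last by rewrite !mul0r mulr0.
rewrite mul1r mulr1 ler_expR.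
have x_le : enorm x <= enorm c + Rad.
  have := enormD_le (x - c) c; have := Omega_sub Omega_x.
  by rewrite /eclosed_ball/= subrK; lra.
have := normr_dotp_le y x; have := ler_wpM2l (enorm_ge0 y) x_le.
by have := ler_norm (- dotp y x); rewrite normrN; lra.
Qed.

Let laplaceE y : laplace y = (fine (laplace y))%:E.
Proof.
rewrite fineK// ge0_fin_numE; first exact: le_lt_trans (laplace_le y) (ltry _).
by apply: leb_int_ge0 => x; rewrite lee_fin mulr_ge0 ?expR_ge0.
Qed.

Let laplace_ge y :
  ((expR (- dotp y alpha + enorm y * eta / 2) * ((eta / 4) ^+ d * w))%:E <= laplace y)%E.
Proof.
have eta4 : 0 < eta / 4 by rewrite divr_gt0.
rewrite EFinM -(volume_eball (shifted_center alpha y eta)) //.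
rewrite /volume -leb_intZl ?expR_gt0//.
apply: le_leb_int => x; first by rewrite -EFinM lee_fin mulr_ge0 ?expR_ge0.
rewrite -EFinM lee_fin !indicE.
have [/set_mem x_near|_] := boolP (x \in eball _ _); last by rewrite mulr0 mulr_ge0 ?expR_ge0.
rewrite mem_set; last exact: eball_sub (shifted_eball_sub eta_gt0 x_near).
rewrite mulr1 mul1r ler_expR.
by have := shifted_eball_dotp x_near; lra.
Qed.

Lemma F_alpha_ge y :
  enorm y * eta / 2 + ln ((eta / 4) ^+ d * w / V) <= F_alpha Omega alpha y.
Proof.
set m := (eta / 4) ^+ d * w.
have m_gt0 : 0 < m by rewrite mulr_gt0 ?exprn_gt0 ?divr_gt0 ?unit_ball_volume_gt0.
have V_gt0 := volume_Omega_gt0.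
have lap_ge : expR (- dotp y alpha + enorm y * eta / 2) * m <= fine (laplace y).
  by rewrite -lee_fin -laplaceE laplace_ge.
rewrite /F_alpha /unif_int -/(laplace y).
have E_gt0 := expR_gt0 (- dotp y alpha + enorm y * eta / 2).
have lap_gt0 : 0 < fine (laplace y) by apply: lt_le_trans lap_ge; rewrite mulr_gt0.
have : ln (expR (- dotp y alpha + enorm y * eta / 2) * (m / V)) <= ln (fine (laplace y) / V).
  rewrite ler_ln ?posrE ?(mulr_gt0 E_gt0) ?divr_gt0 //.
  by rewrite mulrA ler_pM2r ?invr_gt0.
by rewrite lnM ?posrE ?expR_gt0 ?divr_gt0 // expRK; lra.
Qed.

Lemma enorm_le_of_F_alpha_le0 y : F_alpha Omega alpha y <= 0 ->
  enorm y * eta / 2 <= d%:R * ln (4 * Rad / eta).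
Proof.
move=> F_le0; set m := (eta / 4) ^+ d * w.
have m_gt0 : 0 < m by rewrite mulr_gt0 ?exprn_gt0 ?divr_gt0 ?unit_ball_volume_gt0.
have ratio_gt0 : 0 < V / m by rewrite divr_gt0 ?volume_Omega_gt0.
have ratio_le : V / m <= (4 * Rad / eta) ^+ d.
  rewrite ler_pdivrMr // /m mulrA -exprMn (_ : 4 * Rad / eta * (eta / 4) = Rad).
    by rewrite -lee_fin -volume_OmegaE volume_Omega_le.
  by field; rewrite gt_eqF.
have Rad_eta_ge0 : 0 <= 4 * Rad / eta by rewrite divr_ge0 ?mulr_ge0 ?Rad_ge0 ?ltW.
rewrite -ln_exprn //; last exact: lt_le_trans ratio_le.
apply: le_trans (_ : ln (V / m) <= _); last first.
  by rewrite ler_ln ?posrE // (lt_le_trans ratio_gt0).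
have V_gt0 := volume_Omega_gt0.
by have := F_alpha_ge y; rewrite -/m !ln_div ?posrE //; lra.
Qed.

End minimizer_bound.

Theorem mainTheorem6 (R : realType) (d : nat) (Omega : set 'rV[R]_d)
  (c : 'rV[R]_d) (Rad eta : R) (alpha ystar : 'rV[R]_d) :
  convex_body Omega ->
  Omega `<=` eclosed_ball c Rad ->
  0 < eta ->
  eball alpha eta `<=` Omega ->
  (forall y : 'rV[R]_d, F_alpha Omega alpha ystar <= F_alpha Omega alpha y) ->
  enorm ystar <= (2 * d%:R / eta) * ln (4 * Rad / eta).
Proof.
move=> _ Omega_sub eta_gt0 eball_sub ystar_min.
have F_le0 : F_alpha Omega alpha ystar <= 0.
  by rewrite -(F_alpha0 Omega_sub eta_gt0 eball_sub); exact: ystar_min.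
rewrite -(@ler_pM2r _ (eta / 2)) ?divr_gt0 // mulrA.
rewrite (_ : _ * _ * (eta / 2) = d%:R * ln (4 * Rad / eta)); last by field; rewrite gt_eqF.
exact (enorm_le_of_F_alpha_le0 Omega_sub eta_gt0 eball_sub F_le0).
Qed.
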